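(* For any positive integer $k$ and any $\underline{\zeta}\in\mathbb{R}^k$ we have \[ \lambda_{k,1}(\underline{\zeta})=\infty \quad\Longleftrightarrow\quad \widehat{\lambda}_{k,2}(\underline{\zeta})=\widehat{\lambda}_{k,3}(\underline{\zeta})=\cdots=\widehat{\lambda}_{k,k+1}(\underline{\zeta})=0. \]
   Context: For $\underline{\zeta}=(\zeta_1,\ldots,\zeta_k)\in\mathbb{R}^k$ and $1\leq j\leq k+1$, $\lambda_{k,j}(\underline{\zeta})$ (resp. $\widehat{\lambda}_{k,j}(\underline{\zeta})$) is the supremum of all $\eta\in\mathbb{R}$ such that the system $|x|\leq X$, $\max_{1\leq i\leq k}|\zeta_i x-y_i|\leq X^{-\eta}$ has at least $j$ linearly independent solutions $(x,y_1,\ldots,y_k)\in\mathbb{Z}^{k+1}$ for arbitrarily large real $X$ (resp. for all sufficiently large real $X$). *)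

From HB Require Import structures.
From mathcomp Require Import all_boot all_order all_algebra.
From mathcomp Require Import all_classical all_reals all_analysis.
Set Implicit Arguments. Unset Strict Implicit. Unset Printing Implicit Defensive.
Import Order.TTheory GRing.Theory Num.Theory.
Local Open Scope classical_set_scope.
Local Open Scope ring_scope.

(* An integer vector v in Z^(k+1) encodes (x, y_1, ..., y_k) with
   x = v 0 ord0 and y_i = v 0 (lift ord0 i). *)
Definition is_sol {R : realType} (k : nat) (zeta : 'I_k -> R) (X eta : R)
    (v : 'rV[int]_(k.+1)) : Prop :=
  `|((v 0 ord0)%:~R : R)| <= X /\
  forall i : 'I_k,
    `|zeta i * (v 0 ord0)%:~R - (v 0 (lift ord0 i))%:~R| <= X `^ (- eta).

(* the system has at least j linearly independent integer solutions:
   j solutions (rows of A) which are linearly independent (over R,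
   equivalently over Q or Z since they are integer vectors). *)
Definition has_indep_sols {R : realType} (k j : nat) (zeta : 'I_k -> R)
    (X eta : R) : Prop :=
  exists A : 'M[int]_(j, k.+1),
    (forall r : 'I_j, is_sol zeta X eta (row r A)) /\
    \rank (map_mx (fun z : int => (z%:~R : R)) A) = j.

Definition lambda {R : realType} (k j : nat) (zeta : 'I_k -> R) : \bar R :=
  ereal_sup [set (eta%:E)%E | eta in
    [set eta : R | forall X0 : R, exists X : R, X0 < X /\ has_indep_sols j zeta X eta]].

Definition lambda_hat {R : realType} (k j : nat) (zeta : 'I_k -> R) : \bar R :=
  ereal_sup [set (eta%:E)%E | eta in
    [set eta : R | exists X0 : R, forall X : R, X0 < X -> has_indep_sols j zeta X eta]].

From HB Require Import structures.
From mathcomp Require Import all_boot all_order all_algebra.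
From mathcomp Require Import all_classical all_reals all_analysis.
From mathcomp Require Import ring lra.
Import Order.TTheory GRing.Theory Num.Theory.
Local Open Scope ring_scope.
Set Implicit Arguments. Unset Strict Implicit.

(* If lambda_{k,1} is infinite, take a solution v of huge exponent at some X1: any solution
   of positive exponent eta at X = X1^(1 + 2/eta) has an integer 2x2 minor with v of modulus
   < 1, hence is proportional to v, so there are never two independent ones and
   hat-lambda_{k,j} <= 0 for j >= 2; the reverse inequality holds because the unit vectors
   are solutions of every negative exponent.  Conversely, if lambda_{k,1} < mu, Dirichlet's
   theorem at the scales Y = X^d and X gives two solutions of a fixed positive exponent;
   were they proportional, the one at scale Y would have exponent mu, so for large X they are
   independent and hat-lambda_{k,2} > 0. *)

Lemma intr_norm_lt1 (R : realDomainType) (z : int) : `|z%:~R : R| < 1 -> z = 0.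
Proof.
rewrite -intr_norm -[1 : R]/(1%:~R) ltr_int -(add0r 1) ltzD1 normr_le0.
by move/eqP.
Qed.

Lemma intr_norm_ge1 (R : realDomainType) (z : int) : z != 0 -> 1 <= `|z%:~R : R|.
Proof. by move=> z0; rewrite leNgt; apply: contra z0 => /intr_norm_lt1 ->. Qed.

Lemma ord2_cases (r : 'I_2) : r = 0 \/ r = 1.
Proof. by case: r => [[|[|//]]] r2; [left | right]; apply: val_inj. Qed.

Section Rank.
Variable F : fieldType.

Lemma mxrank2_minor n (A : 'M[F]_(2, n)) (i j : 'I_n) :
  A 0 i * A 1 j != A 0 j * A 1 i -> \rank A = 2%N.
Proof.
move=> minor; apply/eqP; apply: contraNT minor.
move=> /row_freePn[r /sub_rVP[a /rowP eq_r]].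
have [r0 | r1] := ord2_cases r.
- have := eq_r i; have := eq_r j; rewrite r0 !mxE /= => -> ->.
  by rewrite (_ : lift 0 0 = 1); [apply/eqP; ring | apply: val_inj].
- have := eq_r i; have := eq_r j; rewrite r1 !mxE /= => -> ->.
  by rewrite (_ : lift 1 0 = 0); [apply/eqP; ring | apply: val_inj].
Qed.

Lemma mxrank_le1_proportional m n (A : 'M[F]_(m, n)) (v : 'rV[F]_n) (c : 'I_n) :
  v 0 c != 0 -> (forall r l, v 0 c * A r l = A r c * v 0 l) -> (\rank A <= 1)%N.
Proof.
move=> vc0 prop; have -> : A = (\col_r (A r c / v 0 c)) *m v.
  by apply/matrixP => r l; rewrite !mxE big_ord1 !mxE mulrAC -prop mulrC mulKf.
exact: leq_trans (mxrankM_maxr _ _) (rank_leq_row _).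
Qed.

End Rank.

Section Dirichlet.
Variables (R : realType) (k : nat) (zeta : 'I_k -> R).

Definition frac (t : R) : R := t - (Num.floor t)%:~R.

Lemma frac_ge0 t : 0 <= frac t.
Proof. by rewrite subr_ge0 floor_le. Qed.

Lemma frac_lt1 t : frac t < 1.
Proof. by have /andP[_] := floor_itv t; rewrite /frac intrD; lra. Qed.

Lemma truncn_eq_dist_lt1 (a b : R) : 0 <= a -> 0 <= b ->
  Num.truncn a = Num.truncn b -> `|a - b| < 1.
Proof.
move=> a0 b0 ab; have /andP[a1 a2] := truncn_itv a0; have /andP[b1 b2] := truncn_itv b0.
by rewrite ab -natr1 in a1 a2; rewrite -natr1 in b2; rewrite ltr_norml; lra.
Qed.

(* Pigeonhole: the N^k + 1 points frac(n zeta), 0 <= n <= N^k, lie in N^k boxes of side 1/N. *)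
Lemma dirichlet_box (N : nat) : (0 < N)%N -> exists (d : nat) (y : 'I_k -> int),
  (0 < d <= N ^ k)%N /\ forall i, `|zeta i * d%:R - (y i)%:~R| < N%:R^-1.
Proof.
case: N => [//|N] _.
have box_lt t : (Num.truncn (N.+1%:R * frac t) < N.+1)%N.
  rewrite truncn_lt_nat ?mulr_ge0 ?frac_ge0 //.
  by rewrite -[ltRHS]mulr1 ltr_pM2l ?frac_lt1.
pose box (n : 'I_(N.+1 ^ k).+1) : {ffun 'I_k -> 'I_N.+1} :=
  [ffun i => inord (Num.truncn (N.+1%:R * frac (n%:R * zeta i)))].
have [a [b [lt_ab box_ab]]] : exists a b : 'I_(N.+1 ^ k).+1, (a < b)%N /\ box a = box b.
  have /injectivePn[a [b neq_ab box_ab]] : ~~ injectiveb box.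
    by apply: contraTN isT => /injectiveP/leq_card; rewrite card_ffun !card_ord ltnn.
  case: (ltngtP a b) => [ab | ba | /val_inj/eqP]; last by rewrite (negPf neq_ab).
    by exists a, b.
  by exists b, a.
exists (b - a)%N, (fun i => Num.floor (b%:R * zeta i) - Num.floor (a%:R * zeta i)).
split => [|i].
  by rewrite subn_gt0 lt_ab (leq_trans (leq_subr _ _)) // -ltnS.
have := congr1 (fun g : {ffun 'I_k -> 'I_N.+1} => val (g i)) box_ab.
rewrite /= !ffunE /= !inordK //.
move=> /truncn_eq_dist_lt1; rewrite !mulr_ge0 ?frac_ge0 // => /(_ isT isT).
rewrite -mulrBr normrM ger0_norm // natrB ?(ltnW lt_ab) // intrB.
set yb := Num.floor (b%:R * zeta i); set ya := Num.floor (a%:R * zeta i).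
have -> : zeta i * (b%:R - a%:R) - (yb%:~R - ya%:~R)
    = frac (b%:R * zeta i) - frac (a%:R * zeta i).
  by rewrite /frac -/yb -/ya; ring.
by rewrite -div1r ltr_pdivlMr ?ltr0Sn // distrC mulrC.
Qed.

Definition lin_form (v : 'rV[int]_k.+1) (i : 'I_k) : R :=
  zeta i * (v 0 ord0)%:~R - (v 0 (lift ord0 i))%:~R.

Lemma dirichlet (Q : R) : (0 < k)%N -> 2 `^ (2 * k)%:R <= Q ->
  exists v : 'rV[int]_k.+1, [/\ v 0 ord0 != 0, `|(v 0 ord0)%:~R : R| <= Q &
    forall i, `|lin_form v i| <= Q `^ (- ((2 * k)%:R)^-1)].
Proof.
move=> k0 hQ; set c : R := ((2 * k)%:R)^-1.
have c0 : 0 < c by rewrite invr_gt0 ltr0n muln_gt0.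
have Q1 : 1 <= Q.
  by apply: le_trans hQ; apply: le_trans (le1r_powR _ _); rewrite ?ler1n ?muln_gt0 //; lra.
set t := Q `^ c.
have t2 : 2 <= t.
  have -> : 2 = (2 `^ (2 * k)%:R) `^ c :> R.
    by rewrite -powRrM mulfV ?powRr1 // pnatr_eq0 -lt0n muln_gt0.
  by rewrite ge0_ler_powR ?nnegrE ?powR_ge0 //; [exact: ltW | lra].
have Qt : Q `^ (k%:R^-1) = t ^+ 2.
  rewrite -powR_mulrn ?powR_ge0 // -powRrM /c natrM; congr (_ `^ _).
  by field; rewrite pnatr_eq0 -lt0n.
set N := Num.truncn (t ^+ 2).
have tN : t <= N%:R.
  by have := truncnS_gt (t ^+ 2); rewrite -natr1 expr2; nra.
have N0 : (0 < N)%N by rewrite -(ltr0n R); lra.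
have NkQ : (N ^ k)%:R <= Q.
  rewrite natrX (@le_trans _ _ ((t ^+ 2) ^+ k)) //.
    by rewrite ler_pXn2r ?nnegrE ?truncn_le // exprn_ge0 //; lra.
  by rewrite -Qt -powR_mulrn ?powR_ge0 // -powRrM mulVf ?powRr1 ?pnatr_eq0 -?lt0n //; lra.
have [d [y [/andP[d0 dN] err]]] := dirichlet_box N0.
exists (\row_l (if unlift ord0 l is Some i then y i else d%:Z)).
rewrite !mxE unlift_none; split => [|//=|i].
- by rewrite eqz_nat -lt0n.
- by rewrite ger0_norm // (le_trans _ NkQ) // ler_nat.
- rewrite /lin_form !mxE unlift_none liftK; apply/ltW/(lt_le_trans (err i)).
  by rewrite powRN -/c -/t lef_pV2 ?posrE //; lra.
Qed.

End Dirichlet.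

Section Solutions.
Variables (R : realType) (k : nat) (zeta : 'I_k -> R).

Local Notation lin_form := (lin_form zeta).
Local Notation intR := (fun z : int => z%:~R : R).

Lemma indep_sols_neg (j : nat) (e : R) : (j <= k.+1)%N -> 0 < e ->
  exists X0 : R, forall X, X0 < X -> has_indep_sols j zeta X (- e).
Proof.
move=> jk e0; set S := \sum_l `|zeta l|.
have bool_le1 (b : bool) : `|(b%:R : int)%:~R : R| <= 1 by case: b; rewrite ?normr1 ?normr0.
exists (Num.max 1 ((S + 1) `^ e^-1)) => X; rewrite gt_max => /andP[X1 XS].
exists (pid_mx j); split => [r|]; last first.
  rewrite (_ : map_mx _ _ = pid_mx j) ?rank_pid_mx //.
  by apply/matrixP => a b; rewrite !mxE; case: (_ && _).
split=> [|i]; first by rewrite !mxE (le_trans (bool_le1 _)) ?ltW.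
have SX : S + 1 <= X `^ e.
  have -> : S + 1 = ((S + 1) `^ e^-1) `^ e.
    by rewrite -powRrM mulVf ?gt_eqF // powRr1 // addr_ge0 ?sumr_ge0.
  by rewrite ge0_ler_powR ?nnegrE ?powR_ge0 ?ltW //; lra.
rewrite opprK !mxE (le_trans _ SX) // (le_trans (ler_normB _ _)) // lerD ?bool_le1 //.
rewrite normrM (le_trans (ler_wpM2l (normr_ge0 _) (bool_le1 _))) // mulr1.
by rewrite /S (bigD1 i) //= lerDl sumr_ge0.
Qed.

Lemma minor_lin_form (v w : 'rV[int]_k.+1) (i : 'I_k) :
  intR (v 0 ord0 * w 0 (lift ord0 i) - w 0 ord0 * v 0 (lift ord0 i))
  = intR (w 0 ord0) * lin_form v i - intR (v 0 ord0) * lin_form w i.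
Proof. by rewrite /lin_form intrB !intrM; ring. Qed.

(* The minor is an integer bounded in absolute value by [X * X1^-eta1 + X1 * X^-eta]. *)
Lemma sols_minor_eq0 (X1 X eta1 eta : R) (v w : 'rV[int]_k.+1) (i : 'I_k) :
  is_sol zeta X1 eta1 v -> is_sol zeta X eta w ->
  X * X1 `^ (- eta1) + X1 * X `^ (- eta) < 1 ->
  v 0 ord0 * w 0 (lift ord0 i) = w 0 ord0 * v 0 (lift ord0 i).
Proof.
move=> [xv Lv] [xw Lw] small; apply/eqP; rewrite -subr_eq0; apply/eqP/(@intr_norm_lt1 R).
rewrite minor_lin_form (le_lt_trans (ler_normB _ _)) // (le_lt_trans _ small) //.
by rewrite !normrM lerD // ler_pM // ?Lv ?Lw.
Qed.

Lemma sol_head_eq0 (X eta : R) (v : 'rV[int]_k.+1) :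
  is_sol zeta X eta v -> 1 < X -> 0 < eta -> v 0 ord0 = 0 -> v = 0.
Proof.
move=> [_ Lv] X1 eta0 v0; apply/rowP => l; rewrite mxE.
case: (unliftP ord0 l) => [i ->|->] //; apply: (@intr_norm_lt1 R).
have := Lv i; rewrite v0 mulr0 sub0r normrN => /le_lt_trans; apply.
rewrite powRN invf_lt1 ?powR_gt0; try lra.
have := gt0_ltr_powR eta0 (_ : 1 \is Num.nneg) (_ : X \is Num.nneg) X1.
by rewrite powR1 !nnegrE; apply; lra.
Qed.

Lemma rank_sols_le1 (X1 X eta1 eta : R) (v : 'rV[int]_k.+1) j (A : 'M[int]_(j, k.+1)) :
  is_sol zeta X1 eta1 v -> v 0 ord0 != 0 -> (forall r, is_sol zeta X eta (row r A)) ->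
  X * X1 `^ (- eta1) + X1 * X `^ (- eta) < 1 ->
  (\rank (map_mx intR A) <= 1)%N.
Proof.
move=> solv v0 solA small.
apply: (@mxrank_le1_proportional _ _ _ _ (map_mx intR v) ord0); first by rewrite mxE intr_eq0.
move=> r l; rewrite !mxE -!intrM; congr intR.
case: (unliftP ord0 l) => [i ->|->]; last exact: mulrC.
by have := sols_minor_eq0 i solv (solA r) small; rewrite !mxE.
Qed.

(* With M := 1 + 2 / eta, both terms of the minor bound are at most X1^-1. *)
Lemma rank_sols_le1_at_power (eta eta1 X1 : R) (v : 'rV[int]_k.+1) j
    (A : 'M[int]_(j, k.+1)) :
  0 < eta -> 2 + 2 / eta <= eta1 -> 2 < X1 -> is_sol zeta X1 eta1 v -> v != 0 ->
  (forall r, is_sol zeta (X1 `^ (1 + 2 / eta)) eta (row r A)) ->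
  (\rank (map_mx intR A) <= 1)%N.
Proof.
move=> eta0 eta1_big X12 solv v0 solA; set M := 1 + 2 / eta.
have X1_ge1 : 1 <= X1 by lra.
have X1_neq0 : X1 != 0 by rewrite gt_eqF //; lra.
have M_ge1 : 1 <= M by rewrite lerDl divr_ge0 ?ltW.
have etaM : M * eta = eta + 2 by rewrite mulrDl mul1r divfK ?gt_eqF.
have X1_inv : X1 `^ (-1) = X1^-1 by rewrite powR_inv1 // (le_trans ler01).
have bound1 : X1 `^ M * X1 `^ (- eta1) <= X1^-1.
  by rewrite -X1_inv -powRD ?X1_neq0 ?implybT //; apply: ler_powR => //; rewrite /M; lra.
have bound2 : X1 * (X1 `^ M) `^ (- eta) <= X1^-1.
  rewrite -X1_inv -powRrM -{1}(powRr1 (ltW (lt_le_trans ltr01 X1_ge1))).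
  rewrite -powRD ?X1_neq0 ?implybT //; apply: ler_powR => //; rewrite mulrN etaM; lra.
apply: (rank_sols_le1 solv _ solA).
  apply: contra v0 => /eqP v00; apply/eqP/(sol_head_eq0 solv) => //; first lra.
  by apply: lt_le_trans eta1_big; rewrite ltr_wpDr ?divr_ge0 ?ltW.
rewrite -/M; apply: le_lt_trans (lerD bound1 bound2) _.
by rewrite -mulr2n -mulr_natr ltr_pdivrMl; lra.
Qed.

Lemma indep_sols1 (X eta : R) (v : 'rV[int]_k.+1) :
  is_sol zeta X eta v -> v 0 ord0 != 0 -> has_indep_sols 1 zeta X eta.
Proof.
move=> solv v0; exists v; split=> [r|].
  by rewrite (_ : row r v = v) //; apply/rowP => l; rewrite mxE (ord1 r).
apply/eqP; rewrite eqn_leq rank_leq_row lt0n mxrank_eq0.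
by apply: contra v0 => /eqP/matrixP/(_ 0 ord0); rewrite !mxE => /eqP; rewrite intr_eq0.
Qed.

Lemma indep_sols2 (X eta : R) (v w : 'rV[int]_k.+1) (i : 'I_k) :
  is_sol zeta X eta v -> is_sol zeta X eta w ->
  v 0 ord0 * w 0 (lift ord0 i) != w 0 ord0 * v 0 (lift ord0 i) ->
  has_indep_sols 2 zeta X eta.
Proof.
move=> solv solw minor; exists (\matrix_(r < 2) if r == 0 then v else w).
split=> [r|]; first by rewrite rowK; case: (r == 0).
apply: (@mxrank2_minor _ _ _ ord0 (lift ord0 i)).
by rewrite !mxE /= -!intrM eqr_int [v _ (lift _ _) * _]mulrC.
Qed.

Lemma lin_form_proportional (v w : 'rV[int]_k.+1) (i : 'I_k) :
  v 0 ord0 * w 0 (lift ord0 i) = w 0 ord0 * v 0 (lift ord0 i) -> w 0 ord0 != 0 ->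
  `|lin_form v i| <= `|intR (v 0 ord0)| * `|lin_form w i|.
Proof.
move=> minor0 w0; have := minor_lin_form v w i.
rewrite minor0 subrr => /esym/eqP; rewrite subr_eq0 => /eqP /(congr1 Num.norm).
rewrite !normrM => <-.
by rewrite ler_peMl // intr_norm_ge1.
Qed.

(* Dirichlet at the scales [Y = X^d] and [X] gives two approximations; if they were
   proportional, the coarse one would be a solution at [Y] with exponent [mu]. *)
Lemma eventually_two_sols (mu : R) : (0 < k)%N -> 1 <= mu ->
  (exists Y0, forall Y, Y0 < Y -> ~ has_indep_sols 1 zeta Y mu) ->
  exists2 eta, 0 < eta & exists X0, forall X, X0 < X -> has_indep_sols 2 zeta X eta.
Proof.
move=> k0 mu1 [Y0 no_sol].
set c : R := ((2 * k)%:R)^-1; set d := c / (mu + 1).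
have c0 : 0 < c by rewrite invr_gt0 ltr0n muln_gt0.
have c1 : c <= 1 by rewrite invf_le1 ?ltr0n ?muln_gt0 // ler1n muln_gt0.
have d0 : 0 < d by rewrite divr_gt0 //; lra.
have d1 : d <= 1 by rewrite ler_pdivrMr; nra.
set Q0 : R := 2 `^ (2 * k)%:R.
have Q01 : 1 <= Q0 by apply: le_trans (le1r_powR _ _); rewrite ?ler1n ?muln_gt0 //; lra.
set B := Num.max Q0 (Y0 + 1).
have B1 : 1 <= B by rewrite le_max Q01.
exists (d * c); first exact: mulr_gt0.
exists (B `^ d^-1) => X XB; set Y := X `^ d.
have BX : B < X by apply: le_lt_trans XB; rewrite le1r_powR // invf_ge1.
have BY : B < Y.
  have -> : B = (B `^ d^-1) `^ d by rewrite -powRrM mulVf ?gt_eqF ?powRr1 //; lra.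
  by rewrite gt0_ltr_powR ?nnegrE ?powR_ge0 //; lra.
have Q0Y : Q0 <= Y by rewrite (le_trans _ (ltW BY)) // le_max lexx.
have Y0Y : Y0 < Y by rewrite (le_lt_trans _ BY) // le_max lerDl ler01 orbT.
have YX : Y <= X by rewrite ler1_powR //; lra.
have [v [v0 vY Lv]] := dirichlet zeta k0 Q0Y.
have [w [w0 wX Lw]] := dirichlet zeta k0 (le_trans Q0Y YX).
have [[i minor] | prop] := pselect (exists i : 'I_k,
    v 0 ord0 * w 0 (lift ord0 i) != w 0 ord0 * v 0 (lift ord0 i)).
  apply: (indep_sols2 (v := v) (w := w) _ _ minor); split => [|l].
  - exact: le_trans vY YX.
  - by rewrite /Y -powRrM mulrN in Lv; apply: Lv.
  - exact: wX.
  - by apply: le_trans (Lw l) _; rewrite ler_powR ?lerN2 ?ger_pMl //; lra.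
exfalso; apply: (no_sol Y Y0Y); apply: (indep_sols1 (v := v)) => //; split=> // i.
have prop_i : v 0 ord0 * w 0 (lift ord0 i) = w 0 ord0 * v 0 (lift ord0 i).
  by apply/eqP; apply: contrapT => minor; apply: prop; exists i; apply/negP.
have Xc : X `^ (- c) = Y `^ (- (mu + 1)).
  by rewrite /Y -powRrM /d; congr (_ `^ _); field; lra.
have Ymu : Y * Y `^ (- (mu + 1)) = Y `^ (- mu).
  have Y_neq0 : Y != 0 by rewrite gt_eqF //; lra.
  rewrite -{1}(powRr1 (_ : 0 <= Y)) -?powRD ?Y_neq0 ?implybT //; last lra.
  by congr (_ `^ _); ring.
apply: le_trans (lin_form_proportional prop_i w0) _.
by rewrite -Ymu -Xc ler_pM ?Lw.
Qed.
End Solutions.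

Section Exponents.
Variables (R : realType) (k : nat) (zeta : 'I_k -> R).

Lemma lambda_hat_ge0 (j : nat) : (j <= k.+1)%N -> (0 <= lambda_hat j zeta)%E.
Proof.
move=> jk; apply/lee_subgt0Pr => e e0; rewrite sub0e -EFinN.
have [X0 sols] := indep_sols_neg zeta jk e0.
by apply: ereal_sup_ubound; exists (- e) => //; exists X0.
Qed.

Lemma lambda_hat_le0 (j : nat) : lambda 1 zeta = +oo%E -> (2 <= j)%N ->
  (lambda_hat j zeta <= 0)%E.
Proof.
move=> lambda1 j2; apply: ge_ereal_sup => _ [eta [X0 sols] <-].
rewrite lee_fin leNgt; apply/negP => eta0.
have /ereal_sup_gt[_ [eta1 often <-]] : ((2 + 2 / eta)%:E < lambda 1 zeta)%E.
  by rewrite lambda1 ltry.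
rewrite lte_fin => /ltW eta1_big.
have [X1 [X1_big [A [solA rankA]]]] := often (Num.max 2 X0).
move: X1_big; rewrite gt_max => /andP[X12 X0X1].
have X1_ge1 : 1 <= X1 by lra.
have M_ge1 : 1 <= 1 + 2 / eta by rewrite lerDl divr_ge0 ?ltW.
have [B [solB rankB]] := sols _ (lt_le_trans X0X1 (le1r_powR X1_ge1 M_ge1)).
have A0_neq0 : row 0 A != 0.
  apply/negP => /eqP A0; move: rankA; rewrite (_ : map_mx _ A = 0) ?mxrank0 //.
  by apply/matrixP => r l; have /rowP/(_ l) := A0; rewrite (ord1 r) !mxE => ->.
have := rank_sols_le1_at_power eta0 eta1_big X12 (solA 0) A0_neq0 solB.
by rewrite rankB => /(leq_trans j2).
Qed.

Lemma lambda_hat2_gt0 : (0 < k)%N -> lambda 1 zeta != +oo%E -> (0 < lambda_hat 2 zeta)%E.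
Proof.
move=> k0 lambda1.
have [mu mu1 lambda1_mu] : exists2 mu : R, 1 <= mu & (lambda 1 zeta < mu%:E)%E.
  case: (lambda 1 zeta) lambda1 => [r _ | // | _].
    exists (Num.max 1 (r + 1)); first by rewrite le_max lexx.
    by rewrite lte_fin lt_max ltrDl ltr01 orbT.
  by exists 1; rewrite ?ltNye.
have rare : exists Y0, forall Y, Y0 < Y -> ~ has_indep_sols 1 zeta Y mu.
  apply: contrapT => often; move: lambda1_mu; rewrite ltNge => /negP; apply.
  apply: ereal_sup_ubound; exists mu => // X0; apply: contrapT => none; apply: often.
  by exists X0 => Y X0Y sols; apply: none; exists Y.
have [eta eta0 [X0 sols]] := eventually_two_sols k0 mu1 rare.
apply: lt_le_trans (_ : eta%:E <= _)%E; first by rewrite lte_fin.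
by apply: ereal_sup_ubound; exists eta => //; exists X0.
Qed.
End Exponents.

Unset Implicit Arguments.

Theorem lemma8 (R : realType) (k : nat) (hk : (0 < k)%N) (zeta : 'I_k -> R) :
  lambda 1 zeta = +oo%E <->
  (forall j : nat, (2 <= j <= k.+1)%N -> lambda_hat j zeta = 0%E).
Proof.
split=> [lambda1 j /andP[j2 jk] | hat0].
  by apply/le_anti; rewrite lambda_hat_le0 ?lambda_hat_ge0.
apply/eqP; apply: contraT => lambda1.
by have := lambda_hat2_gt0 hk lambda1; rewrite hat0 ?ltxx // ltnS hk.
Qed.
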